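(* There exists a positive constant $C$ such that for all integers $n, m, k, r$ with $2 \leq k \leq m \leq n$ and $r \geq 2$, \[ \binom{n}{m} \binom{m-1}{k-1} \frac{m!}{\Gamma(m/k)^k} \left(\frac{m}{kn}\right)^{mr} \leq C \cdot \min\{m^k, 2^m\} \cdot \left(\frac{1.2}{k^{r-1}}\right)^m . \]
   Context: $\Gamma$ denotes the Gamma function. *)

From Stdlib Require Import Reals.
From Coquelicot Require Import Coquelicot.

Open Scope R_scope.

Definition Gamma (x : R) : R :=
  RInt_gen (fun t => Rpower t (x - 1) * exp (- t))
           (at_right 0) (Rbar_locally p_infty).

(* Write the left-hand side as
     [C(n,m) (m/n)^(2m)] * [C(m-1,k-1) m! / (Gamma(m/k)^k k^m)] * k^(-(r-1)m)
   times (m/n)^(m(r-2)) <= 1.  With u = m/n, the term C(n,m) u^m (1-u)^(n-m) of the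
   binomial expansion of (u + (1-u))^n is at most 1, which bounds the first factor
   by e^(0.181 m); as 0.182 < ln 1.2 this is absorbed by 1.2^m with room to spare.
   For the second factor, let N = ceil(m/k).  Bounding t^(m/k-N) from below by its
   tangent at t = N gives Gamma(m/k) >= N^(m/k-N) (N-1)!; elementary Stirling
   bounds for m! and (N-1)! then reduce the claim to the estimates
   C(m-1,k-1) <= m^k/k!, <= 2^m and <= (3/2)^m 2^k. *)

From Stdlib Require Import Reals Factorial Arith Lra Lia Psatz Classical.
From Coquelicot Require Import Coquelicot.
Open Scope R_scope.

(** * Elementary inequalities *)

Lemma exp_le_exp (a b : R) : a <= b -> exp a <= exp b.
Proof.
  intros Hab. destruct (Rle_lt_or_eq_dec _ _ Hab) as [H|H]; [|subst; lra].
  now apply Rlt_le, exp_increasing.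
Qed.

Lemma le_of_ln_le (a b : R) : 0 < a -> 0 < b -> ln a <= ln b -> a <= b.
Proof. intros Ha Hb H. rewrite <- (exp_ln a), <- (exp_ln b) by lra. now apply exp_le_exp. Qed.

Lemma ln_le_sub1 (z : R) : 0 < z -> ln z <= z - 1.
Proof. intros Hz. pose proof (exp_ineq1_le (ln z)) as H. rewrite exp_ln in H; lra. Qed.

Lemma ln_ge_1_sub_inv (z : R) : 0 < z -> 1 - / z <= ln z.
Proof.
  intros Hz. pose proof (ln_le_sub1 (/ z) (Rinv_0_lt_compat _ Hz)) as H.
  rewrite ln_Rinv in H; lra.
Qed.

Lemma le_of_derive_nonneg (f df : R -> R) (a b : R) : a <= b ->
  (forall t, a <= t <= b -> is_derive f t (df t)) ->
  (forall t, a <= t <= b -> continuous df t) ->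
  (forall t, a < t < b -> 0 <= df t) -> f a <= f b.
Proof.
  intros Hab Hd Hc Hp.
  pose proof (is_RInt_derive f df a b) as H.
  rewrite Rmin_left, Rmax_right in H by lra.
  pose proof (is_RInt_ge_0 df a b _ Hab (H Hd Hc) Hp) as H0.
  unfold minus, plus, opp in H0; simpl in H0. lra.
Qed.

Lemma continuous_of_ex_derive (f : R -> R) (x : R) : ex_derive f x -> continuous f x.
Proof. exact (ex_derive_continuous f x). Qed.

Ltac derive_side := repeat split; try (intro; nra); try nra.

Lemma ln_1p_ge_taylor4 (t : R) : 0 <= t -> t - t^2/2 + t^3/3 - t^4/4 <= ln (1 + t).
Proof.
  intros Ht.
  pose proof (le_of_derive_nonneg (fun t => ln (1 + t) - (t - t^2/2 + t^3/3 - t^4/4))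
     (fun t => t^4 / (1 + t)) 0 t Ht) as H.
  cbv beta in H. rewrite Rplus_0_r, ln_1 in H.
  enough (0 <= ln (1 + t) - (t - t^2/2 + t^3/3 - t^4/4)) by lra.
  eapply Rle_trans; [|apply H].
  - right; field.
  - intros u Hu. auto_derive; [lra|]. field. lra.
  - intros u Hu. apply continuous_of_ex_derive. auto_derive. lra.
  - intros u Hu. apply Rdiv_le_0_compat; [apply pow_le|]; lra.
Qed.

Lemma ln_le_half_sub_inv (z : R) : 1 <= z -> ln z <= (z - / z) / 2.
Proof.
  intros Hz.
  pose proof (le_of_derive_nonneg (fun z => (z - / z) / 2 - ln z)
     (fun z => (z - 1)^2 / (2 * z^2)) 1 z Hz) as H.
  cbv beta in H. rewrite ln_1 in H.
  enough (0 <= (z - / z) / 2 - ln z) by lra.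
  eapply Rle_trans; [|apply H].
  - right; field.
  - intros u Hu. auto_derive; [derive_side|]. field. derive_side.
  - intros u Hu. apply continuous_of_ex_derive. auto_derive. derive_side.
  - intros u Hu. apply Rdiv_le_0_compat; [apply pow2_ge_0|]. nra.
Qed.

Lemma ln_le_pade (z : R) : 0 < z <= 1 -> ln z <= 2 * (z - 1) / (z + 1).
Proof.
  intros Hz.
  pose proof (le_of_derive_nonneg (fun z => ln z - 2 * (z - 1) / (z + 1))
     (fun z => (z - 1)^2 / (z * (z + 1)^2)) z 1 (proj2 Hz)) as H.
  cbv beta in H. rewrite ln_1 in H.
  enough (ln z - 2 * (z - 1) / (z + 1) <= 0) by lra.
  eapply Rle_trans; [apply H|].
  - intros u Hu. auto_derive; [derive_side|]. field. derive_side.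
  - intros u Hu. apply continuous_of_ex_derive. auto_derive. derive_side.
  - intros u Hu. apply Rdiv_le_0_compat; [apply pow2_ge_0|].
    apply Rmult_lt_0_compat; [lra | apply pow_lt; lra].
  - right; field.
Qed.

Lemma ln_artanh_le (y : R) : 0 <= y < 1 ->
  ln (1 + y) - ln (1 - y) <= 2 * y + 2/3 * y^3 / (1 - y^2).
Proof.
  intros Hy.
  pose proof (le_of_derive_nonneg
     (fun y => 2 * y + 2/3 * y^3 / (1 - y^2) - (ln (1 + y) - ln (1 - y)))
     (fun y => 4/3 * y^4 / (1 - y^2)^2) 0 y (proj1 Hy)) as H.
  cbv beta in H. rewrite Rplus_0_r, Rminus_0_r, ln_1 in H.
  enough (0 <= 2 * y + 2/3 * y^3 / (1 - y^2) - (ln (1 + y) - ln (1 - y))) by lra.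
  eapply Rle_trans; [|apply H].
  - right; field.
  - intros u Hu. assert (0 < 1 - u * u) by nra. auto_derive; [derive_side|]. field. derive_side.
  - intros u Hu. assert (0 < 1 - u * u) by nra.
    apply continuous_of_ex_derive. auto_derive. derive_side.
  - intros u Hu. apply Rdiv_le_0_compat; [|apply pow_lt; nra].
    apply Rmult_le_pos; [lra | apply pow_le; lra].
Qed.

Lemma ln2_le : ln 2 <= 0.6935.
Proof.
  rewrite <- (ln_exp 0.6935). apply ln_le; [lra|].
  eapply Rle_trans; [|apply (exp_ge_taylor 0.6935 5); lra].
  simpl. lra.
Qed.

Lemma ln_6_5_ge : 0.182 <= ln (6/5).
Proof.
  replace (6/5) with (1 + 1/5) by field.
  eapply Rle_trans; [|apply ln_1p_ge_taylor4; lra]. lra.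
Qed.

Lemma taylor_gap_le_on_0_quarter (t : R) : 0 < t <= 1/4 ->
  (t - 1) * (t - t^2/2 + t^3/3 - t^4/4) + t * (2 * 0.6935) + 1/8 - 2 * t^2 <= 0.181.
Proof.
  intros Ht.
  assert (0 <= t^3) by (apply pow_le; lra).
  assert (0 <= t^5) by (apply pow_le; lra).
  assert (t^4 <= t^3 / 4) by (replace (t^4) with (t^3 * t) by ring; nra).
  assert (0 <= (1/4 - t) * (1/4 - t) * t) by nra.
  assert (0 <= (1/4 - t) * t * t) by nra.
  nra.
Qed.

Lemma taylor_gap_le_on_quarter_half (t q : R) : 1/4 <= t <= 1/2 ->
  q * (1 + 4 * t) = 2 * t * (1 - 4 * t) ->
  (t - 1) * (t - t^2/2 + t^3/3 - t^4/4) + t * (2 * 0.6935) + q <= 0.181.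
Proof.
  intros Ht Hq.
  assert (0 <= t^3) by (apply pow_le; lra).
  assert (0 <= t^4) by (apply pow_le; lra).
  assert (q <= 0) by nra.
  assert (0 <= (t - 1/4) * (t - 1/4) * t) by nra.
  assert (0 <= (1/2 - t) * t * t) by nra.
  nra.
Qed.

Lemma taylor_gap_le_on_half_1 (t q : R) : 1/2 <= t <= 1 ->
  q * (1 + 2 * t) = 2 * t * (1 - 2 * t) ->
  (t - 1) * (t - t^2/2 + t^3/3 - t^4/4) + t * 0.6935 + q <= 0.181.
Proof.
  intros Ht Hq.
  assert (0 <= t^3) by (apply pow_le; lra).
  assert (0 <= t^4) by (apply pow_le; lra).
  assert (q <= 0) by nra.
  assert (0 <= (t - 1/2) * (1 - t)) by nra.
  assert (0 <= (1 - t) * t * t) by nra.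
  nra.
Qed.

Lemma neg_ln_le_pade (w : R) : 1 <= w -> - ln w <= 2 * (1 - w) / (1 + w).
Proof.
  intros Hw. rewrite <- ln_Rinv by lra.
  replace (2 * (1 - w) / (1 + w)) with (2 * (/ w - 1) / (/ w + 1)) by (field; lra).
  apply ln_le_pade. split; [apply Rinv_0_lt_compat; lra|].
  rewrite <- Rinv_1. apply Rinv_le_contravar; lra.
Qed.

(* The maximum of the left-hand side is about 0.1792 (at t = 0.255), barely
   below ln (6/5) > 0.182; on (0, 1) the term [-ln t] is therefore estimated
   through [-ln (4t)] or [-ln (2t)], whose arguments stay close to 1. *)
Lemma xlnx_gap_le (t : R) : 0 < t -> (t - 1) * ln (1 + t) - t * ln t <= 0.181.
Proof.
  intros Ht. pose proof ln2_le as Hl2.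
  destruct (Rle_or_lt 1 t) as [H1|H1].
  - assert (E : ln (1 + t) = ln t + ln (1 + / t)).
    { rewrite <- ln_mult by (pose proof (Rinv_0_lt_compat t Ht); lra).
      f_equal. field. lra. }
    assert (0 < / t) by (apply Rinv_0_lt_compat; lra).
    pose proof (ln_le_sub1 (1 + / t) ltac:(lra)).
    pose proof (ln_ge_1_sub_inv t Ht).
    assert (t * / t = 1) by (field; lra).
    rewrite E. nra.
  - pose proof (ln_1p_ge_taylor4 t (Rlt_le _ _ Ht)) as HL.
    assert (A : (t - 1) * ln (1 + t) <= (t - 1) * (t - t^2/2 + t^3/3 - t^4/4)) by nra.
    assert (E4 : ln t = ln (4 * t) - 2 * ln 2).
    { rewrite ln_mult by lra. replace 4 with (2 * 2) by ring. rewrite ln_mult by lra. ring. }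
    assert (E2 : ln t = ln (2 * t) - ln 2) by (rewrite ln_mult by lra; ring).
    destruct (Rle_or_lt t (1/4)) as [H2|H2]; [|destruct (Rle_or_lt t (1/2)) as [H3|H3]].
    + pose proof (ln_le_half_sub_inv (/ (4 * t))) as B.
      rewrite ln_Rinv, Rinv_inv in B by lra.
      assert (B' : - ln (4 * t) <= (1/4 * / t - 4 * t) / 2).
      { replace (1/4 * / t) with (/ (4 * t)) by (field; lra). apply B.
        rewrite <- Rinv_1. apply Rinv_le_contravar; lra. }
      assert (t * / t = 1) by (field; lra).
      assert (C : - t * ln t <= t * (2 * 0.6935) + 1/8 - 2 * t^2) by (rewrite E4; nra).
      pose proof (taylor_gap_le_on_0_quarter t ltac:(lra)). lra.
    + pose proof (neg_ln_le_pade (4 * t) ltac:(lra)) as B.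
      assert (C : - t * ln t <= t * (2 * 0.6935) + t * (2 * (1 - 4 * t) / (1 + 4 * t)))
        by (rewrite E4; nra).
      pose proof (taylor_gap_le_on_quarter_half t (t * (2 * (1 - 4 * t) / (1 + 4 * t)))
        ltac:(lra) ltac:(field; lra)). lra.
    + pose proof (neg_ln_le_pade (2 * t) ltac:(lra)) as B.
      assert (C : - t * ln t <= t * 0.6935 + t * (2 * (1 - 2 * t) / (1 + 2 * t)))
        by (rewrite E2; nra).
      pose proof (taylor_gap_le_on_half_1 t (t * (2 * (1 - 2 * t) / (1 + 2 * t)))
        ltac:(lra) ltac:(field; lra)). lra.
Qed.

(** * The binomial factor *)

Lemma sum_f_R0_term_le (f : nat -> R) (n i : nat) : (forall j, 0 <= f j) -> (i <= n)%nat ->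
  f i <= sum_f_R0 f n.
Proof.
  intros Hf Hi. induction n as [|n IH].
  - replace i with 0%nat by lia. simpl. lra.
  - simpl. destruct (Nat.eq_dec i (S n)) as [->|Hne].
    + pose proof (cond_pos_sum f n Hf). lra.
    + specialize (IH ltac:(lia)). specialize (Hf (S n)). lra.
Qed.

Lemma binomial_C_pos (n m : nat) : 0 < Binomial.C n m.
Proof.
  unfold Binomial.C. apply Rdiv_lt_0_compat; [|apply Rmult_lt_0_compat]; apply INR_fact_lt_0.
Qed.

Lemma binomial_term_le_1 (n m : nat) (u : R) : 0 <= u <= 1 -> (m <= n)%nat ->
  Binomial.C n m * u^m * (1 - u)^(n - m) <= 1.
Proof.
  intros Hu Hm.
  assert (E : (u + (1 - u))^n = 1) by (replace (u + (1 - u)) with 1 by ring; apply pow1).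
  rewrite binomial in E. eapply Rle_trans; [|right; exact E].
  apply (sum_f_R0_term_le (fun i => Binomial.C n i * u^i * (1 - u)^(n - i))); [|exact Hm].
  intros j. apply Rmult_le_pos; [apply Rmult_le_pos|]; [apply Rlt_le, binomial_C_pos | |];
    apply pow_le; lra.
Qed.

Lemma pow_eq_exp_ln (x : R) (k : nat) : 0 < x -> x ^ k = exp (INR k * ln x).
Proof. intros Hx. now rewrite <- Rpower_pow. Qed.

(* With u = m/n the binomial term gives [C n m <= u^-m (1-u)^-(n-m)]; writing
   n - m = t m, the logarithm of the resulting bound is m times the gap bounded in
   [xlnx_gap_le]. *)
Lemma binomial_C_mul_ratio_pow_le (n m : nat) : (1 <= m)%nat -> (m <= n)%nat ->
  Binomial.C n m * (INR m / INR n) ^ (2 * m) <= exp (0.181 * INR m).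
Proof.
  intros Hm Hmn.
  assert (Hm0 : 0 < INR m) by (apply lt_0_INR; lia).
  assert (Hn0 : 0 < INR n) by (apply lt_0_INR; lia).
  destruct (Nat.eq_dec n m) as [->|Hne].
  - rewrite Rdiv_diag, pow1, Rmult_1_r by lra.
    unfold Binomial.C. rewrite Nat.sub_diag. simpl INR.
    rewrite Rmult_1_r, Rdiv_diag by apply INR_fact_neq_0.
    pose proof (exp_ineq1_le (0.181 * INR m)). lra.
  - assert (Hmn' : INR m < INR n) by (apply lt_INR; lia).
    set (u := INR m / INR n).
    set (t := (INR n - INR m) / INR m).
    assert (Ht : 0 < t) by (apply Rdiv_lt_0_compat; lra).
    assert (Eu : u = / (1 + t)) by (unfold u, t; field; lra).
    assert (Eu1 : 1 - u = t / (1 + t)) by (unfold u, t; field; lra).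
    assert (Hu : 0 < u < 1).
    { pose proof (Rdiv_lt_0_compat t (1 + t) Ht ltac:(lra)).
      pose proof (Rinv_0_lt_compat (1 + t) ltac:(lra)). lra. }
    assert (Enm : INR (n - m) = INR m * t) by (rewrite minus_INR by lia; unfold t; field; lra).
    pose proof (binomial_term_le_1 n m u ltac:(lra) Hmn) as B.
    assert (Hp1 : 0 < u ^ m) by (apply pow_lt; lra).
    assert (Hp2 : 0 < (1 - u) ^ (n - m)) by (apply pow_lt; lra).
    apply Rle_trans with (u ^ m / (1 - u) ^ (n - m)).
    + replace (u ^ (2 * m)) with (u ^ m * u ^ m) by (rewrite <- pow_add; f_equal; lia).
      apply Rmult_le_reg_r with ((1 - u) ^ (n - m)); [exact Hp2|].
      replace (u ^ m / (1 - u) ^ (n - m) * (1 - u) ^ (n - m)) with (u ^ m) by (field; lra).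
      nra.
    + rewrite (pow_eq_exp_ln u m), (pow_eq_exp_ln (1 - u) (n - m)) by lra.
      unfold Rdiv. rewrite <- exp_Ropp, <- exp_plus. apply exp_le_exp.
      rewrite Eu1, Eu, Enm, ln_Rinv, ln_div by lra.
      pose proof (xlnx_gap_le t Ht). nra.
Qed.

(** * Stirling-type bounds *)

Lemma INR_fact_succ (n : nat) : INR (fact (S n)) = INR (S n) * INR (fact n).
Proof. now rewrite fact_simpl, mult_INR. Qed.

Lemma ln_pow_lt (x : R) (n : nat) : 0 < x -> ln (x ^ n) = INR n * ln x.
Proof. intros Hx. now apply ln_pow. Qed.

Lemma succ_pow_eq (m a : nat) : (1 <= m)%nat ->
  INR (S m) ^ a = INR m ^ a * exp (INR a * ln (1 + / INR m)).
Proof.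
  intros Hm. assert (H0 : 1 <= INR m) by (apply (le_INR 1); lia).
  rewrite <- pow_eq_exp_ln by (pose proof (Rinv_0_lt_compat (INR m) ltac:(lra)); lra).
  rewrite <- Rpow_mult_distr. f_equal. rewrite S_INR. field. lra.
Qed.

Lemma fact_mul_exp_le (m : nat) : (1 <= m)%nat ->
  INR (fact m) * exp (INR m) <= exp 1 * INR m * INR m ^ m.
Proof.
  induction m as [|m IH]; intros Hm; [lia|].
  destruct (Nat.eq_dec m 0) as [->|Hm0]; [simpl; lra|].
  specialize (IH ltac:(lia)).
  assert (H1 : 1 <= INR m) by (apply (le_INR 1); lia).
  assert (Hstep : 1 <= INR (S m) * ln (1 + / INR m)).
  { pose proof (ln_ge_1_sub_inv (1 + / INR m)) as L.
    pose proof (Rinv_0_lt_compat (INR m) ltac:(lra)).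
    replace (1 - / (1 + / INR m)) with (/ INR (S m)) in L by (rewrite S_INR; field; lra).
    rewrite S_INR in *. apply Rmult_le_reg_r with (/ (INR m + 1));
      [apply Rinv_0_lt_compat; lra|].
    replace ((INR m + 1) * ln (1 + / INR m) * / (INR m + 1)) with (ln (1 + / INR m))
      by (field; lra). lra. }
  pose proof (exp_le_exp _ _ Hstep) as He.
  rewrite INR_fact_succ, S_INR, exp_plus, <- S_INR, (succ_pow_eq m (S m)) by lia.
  assert (0 < INR (S m)) by (apply lt_0_INR; lia).
  pose proof (exp_pos 1). pose proof (pow_lt (INR m) m ltac:(lra)).
  pose proof (pos_INR (fact m)). pose proof (exp_pos (INR m)).
  simpl pow.
  apply Rle_trans with (INR (S m) * (exp 1 * INR m * INR m ^ m) * exp 1).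
  - replace (INR (S m) * INR (fact m) * (exp (INR m) * exp 1))
      with (INR (S m) * (INR (fact m) * exp (INR m)) * exp 1) by ring.
    apply Rmult_le_compat_r; [lra|]. apply Rmult_le_compat_l; lra.
  - assert (0 <= exp 1 * INR (S m) * (INR m * INR m ^ m)) by
      (repeat apply Rmult_le_pos; lra).
    nra.
Qed.

Lemma robbins_step (x : R) : 1 <= x ->
  (2 * x + 1) * ln (1 + / x) <= 2 + / (6 * x * (x + 1)).
Proof.
  intros Hx. set (y := / (2 * x + 1)).
  assert (Hy : 0 < y < 1).
  { unfold y. split; [apply Rinv_0_lt_compat; lra|].
    rewrite <- Rinv_1. apply Rinv_lt_contravar; lra. }
  assert (E : 1 + / x = (1 + y) * / (1 - y)) by (unfold y; field; lra).
  rewrite E, ln_mult, ln_Rinv by (try apply Rinv_0_lt_compat; lra).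
  pose proof (ln_artanh_le y ltac:(lra)) as H.
  replace (2 * x + 1) with (/ y) by (unfold y; now rewrite Rinv_inv).
  apply Rle_trans with (/ y * (2 * y + 2/3 * y^3 / (1 - y^2))).
  - apply Rmult_le_compat_l; [apply Rlt_le, Rinv_0_lt_compat|]; lra.
  - right. unfold y. field. repeat split; nra.
Qed.

(* A squared Stirling lower bound with e^(11/6) ~ 6.25 in place of 2 pi; it is an
   equality at n = 1, and [robbins_step] bounds the ratio of consecutive terms. *)
Lemma fact_sq_ge (n : nat) : (1 <= n)%nat ->
  exp (11/6 + / (6 * INR n)) * INR n ^ (2 * n + 1) <= INR (fact n) ^ 2 * exp (2 * INR n).
Proof.
  induction n as [|n IH]; intros Hn; [lia|].
  destruct (Nat.eq_dec n 0) as [->|Hn0].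
  { simpl. replace (11/6 + / (6 * 1)) with (2 * 1) by field. lra. }
  specialize (IH ltac:(lia)).
  assert (H1 : 1 <= INR n) by (apply (le_INR 1); lia).
  set (Y := exp (INR (2 * n + 1) * ln (1 + / INR n))).
  assert (P1 : INR (S n) ^ (2 * S n + 1) = INR (S n)^2 * (INR n ^ (2 * n + 1) * Y)).
  { replace (2 * S n + 1)%nat with (2 + (2 * n + 1))%nat by lia.
    rewrite pow_add. f_equal. unfold Y. apply succ_pow_eq. lia. }
  assert (P2 : INR (fact (S n)) ^ 2 = INR (S n)^2 * INR (fact n) ^ 2)
    by (rewrite INR_fact_succ; ring).
  assert (P3 : exp (2 * INR (S n)) = exp (2 * INR n) * exp 2)
    by (rewrite <- exp_plus; f_equal; rewrite S_INR; ring).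
  rewrite P1, P2, P3.
  assert (EA : exp (11/6 + / (6 * INR (S n))) * Y <= exp (11/6 + / (6 * INR n)) * exp 2).
  { unfold Y. rewrite <- !exp_plus. apply exp_le_exp.
    pose proof (robbins_step (INR n) H1). rewrite S_INR.
    replace (INR (2 * n + 1)) with (2 * INR n + 1) by (rewrite plus_INR, mult_INR; simpl; ring).
    replace (/ (6 * INR n)) with (/ (6 * INR n * (INR n + 1)) + / (6 * (INR n + 1)))
      by (field; lra).
    lra. }
  assert (0 < INR n ^ (2 * n + 1)) by (apply pow_lt; lra).
  assert (0 < INR (S n) ^ 2) by (apply pow_lt, lt_0_INR; lia).
  pose proof (exp_pos 2). pose proof (exp_pos (11/6 + / (6 * INR (S n)))).
  assert (0 < Y) by apply exp_pos.
  apply Rle_trans with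
    (INR (S n) ^ 2 * (exp (11/6 + / (6 * INR n)) * INR n ^ (2 * n + 1) * exp 2)).
  - replace (exp (11/6 + / (6 * INR (S n))) * (INR (S n) ^ 2 * (INR n ^ (2 * n + 1) * Y)))
      with (INR (S n) ^ 2 * ((exp (11/6 + / (6 * INR (S n))) * Y) * INR n ^ (2 * n + 1)))
      by ring.
    apply Rmult_le_compat_l; [lra|]. nra.
  - replace (INR (S n) ^ 2 * INR (fact n) ^ 2 * (exp (2 * INR n) * exp 2))
      with (INR (S n) ^ 2 * (INR (fact n) ^ 2 * exp (2 * INR n) * exp 2)) by ring.
    apply Rmult_le_compat_l; [lra|]. apply Rmult_le_compat_r; lra.
Qed.

Lemma ln_fact_le (m : nat) : (1 <= m)%nat ->
  ln (INR (fact m)) <= 1 + ln (INR m) + INR m * ln (INR m) - INR m.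
Proof.
  intros Hm. pose proof (fact_mul_exp_le m Hm) as H.
  assert (H0 : 0 < INR m) by (apply lt_0_INR; lia).
  pose proof (INR_fact_lt_0 m).
  apply ln_le in H; [|apply Rmult_lt_0_compat; [lra | apply exp_pos]].
  rewrite !ln_mult, !ln_exp, ln_pow_lt in H
    by (try apply Rmult_lt_0_compat; try apply exp_pos; try apply pow_lt; lra).
  lra.
Qed.

Lemma ln_fact_ge (n : nat) : (1 <= n)%nat ->
  11/6 + / (6 * INR n) + (2 * INR n + 1) * ln (INR n)
  <= 2 * ln (INR (fact n)) + 2 * INR n.
Proof.
  intros Hn. pose proof (fact_sq_ge n Hn) as H.
  assert (H0 : 0 < INR n) by (apply lt_0_INR; lia).
  pose proof (INR_fact_lt_0 n).
  apply ln_le in H; [|apply Rmult_lt_0_compat; [apply exp_pos | apply pow_lt; lra]].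
  rewrite !ln_mult, !ln_exp, !ln_pow_lt in H by (try apply exp_pos; try apply pow_lt; lra).
  replace (INR (2 * n + 1)) with (2 * INR n + 1) in H
    by (rewrite plus_INR, mult_INR; simpl; ring).
  replace (INR 2) with 2 in H by (simpl; ring). lra.
Qed.

Lemma ln_fact_pred_ge (n : nat) : (1 <= n)%nat ->
  11/6 + (2 * INR n - 1) * ln (INR n) - 2 * INR n <= 2 * ln (INR (fact (n - 1))).
Proof.
  intros Hn. pose proof (ln_fact_ge n Hn) as H.
  assert (H0 : 0 < INR n) by (apply lt_0_INR; lia).
  assert (E : INR (fact n) = INR n * INR (fact (n - 1))).
  { replace n with (S (n - 1)) at 1 by lia. rewrite INR_fact_succ. do 2 f_equal. lia. }
  rewrite E, ln_mult in H by (try apply INR_fact_lt_0; lra).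
  pose proof (Rinv_0_lt_compat (6 * INR n) ltac:(lra)). lra.
Qed.

Lemma ln_fact_ge_weak (k : nat) : (1 <= k)%nat -> INR k * ln (INR k) - INR k <= ln (INR (fact k)).
Proof.
  intros Hk. pose proof (ln_fact_ge k Hk) as H.
  assert (1 <= INR k) by (apply (le_INR 1); lia).
  assert (0 <= ln (INR k)) by (rewrite <- ln_1; apply ln_le; lra).
  pose proof (Rinv_0_lt_compat (6 * INR k) ltac:(lra)). lra.
Qed.

(** * A lower bound for the Gamma function *)

(* [gamma_tail j t] is the upper incomplete gamma function
   Γ(j+1, t) = ∫_t^∞ s^j e^(-s) ds = e^(-t) Σ_(i<=j) j!/i! t^i. *)
Fixpoint gamma_tail_poly (j : nat) (t : R) : R :=
  match j with O => 1 | S j' => t ^ S j' + INR (S j') * gamma_tail_poly j' t end.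

Definition gamma_tail (j : nat) (t : R) : R := exp (- t) * gamma_tail_poly j t.

Lemma gamma_tail_poly_derive (j : nat) (t : R) :
  is_derive (gamma_tail_poly j) t (gamma_tail_poly j t - t ^ j).
Proof.
  induction j as [|j IH].
  - simpl. replace (1 - 1) with (@zero R_AbsRing) by (unfold zero; simpl; ring).
    apply (is_derive_const (K := R_AbsRing) (V := R_NormedModule) 1).
  - pose proof (is_derive_pow (fun t => t) (S j) t 1 (is_derive_id (K := R_AbsRing) t)) as H1.
    pose proof (is_derive_plus _ _ _ _ _ H1 (is_derive_scal _ _ (INR (S j)) _ IH)) as H.
    replace (gamma_tail_poly (S j) t - t ^ S j) with
      (plus (INR (S j) * 1 * t ^ Init.Nat.pred (S j)) (INR (S j) * (gamma_tail_poly j t - t ^ j)))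
      by (unfold plus; simpl; ring).
    exact H.
Qed.

Lemma gamma_tail_derive (j : nat) (t : R) :
  is_derive (gamma_tail j) t (- (t ^ j * exp (- t))).
Proof.
  assert (H1 : is_derive (fun t => exp (- t)) t (- exp (- t))) by (auto_derive; auto; ring).
  pose proof (is_derive_mult _ _ _ _ _ H1 (gamma_tail_poly_derive j t)
    ltac:(intros; apply Rmult_comm)) as H.
  replace (- (t ^ j * exp (- t))) with
    (plus (mult (- exp (- t)) (gamma_tail_poly j t)) (mult (exp (- t)) (gamma_tail_poly j t - t ^ j)))
    by (unfold plus, mult; simpl; ring).
  exact H.
Qed.

Lemma is_RInt_pow_mul_exp (j : nat) (a b : R) :
  is_RInt (fun t => t ^ j * exp (- t)) a b (gamma_tail j a - gamma_tail j b).
Proof.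
  replace (gamma_tail j a - gamma_tail j b) with (minus (- gamma_tail j b) (- gamma_tail j a))
    by (unfold minus, plus, opp; simpl; ring).
  apply (is_RInt_derive (fun t => - gamma_tail j t)).
  - intros u _.
    replace (u ^ j * exp (- u)) with (opp (- (u ^ j * exp (- u)))) by (unfold opp; simpl; ring).
    apply (is_derive_opp (gamma_tail j) u), gamma_tail_derive.
  - intros u _. apply continuous_of_ex_derive. auto_derive. auto.
Qed.

Lemma gamma_tail_0 (j : nat) : gamma_tail j 0 = INR (fact j).
Proof.
  unfold gamma_tail. rewrite Ropp_0, exp_0, Rmult_1_l.
  induction j as [|j IH]; [reflexivity|].
  cbn [gamma_tail_poly]. rewrite IH, INR_fact_succ. simpl. ring.
Qed.

Lemma gamma_tail_poly_ge0 (j : nat) (t : R) : 0 <= t -> 0 <= gamma_tail_poly j t.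
Proof.
  intros Ht. induction j as [|j IH]; cbn [gamma_tail_poly]; [lra|].
  apply Rplus_le_le_0_compat; [apply pow_le; lra|].
  apply Rmult_le_pos; [apply pos_INR | exact IH].
Qed.

Lemma gamma_tail_ge0 (j : nat) (t : R) : 0 <= t -> 0 <= gamma_tail j t.
Proof.
  intros Ht. apply Rmult_le_pos; [apply Rlt_le, exp_pos | now apply gamma_tail_poly_ge0].
Qed.

Lemma gamma_tail_decr (j : nat) (a b : R) : 0 <= a -> a <= b -> gamma_tail j b <= gamma_tail j a.
Proof.
  intros Ha Hab.
  enough (0 <= gamma_tail j a - gamma_tail j b) by lra.
  apply (is_RInt_ge_0 _ a b _ Hab (is_RInt_pow_mul_exp j a b)).
  intros u Hu. apply Rmult_le_pos; [apply pow_le; lra | apply Rlt_le, exp_pos].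
Qed.

Lemma pow_le_1 (u : R) (j : nat) : 0 <= u <= 1 -> u ^ j <= 1.
Proof.
  intros Hu. induction j as [|j IH]; simpl; [lra|].
  pose proof (pow_le u j ltac:(lra)). nra.
Qed.

Lemma gamma_tail_ge_near0 (j : nat) (a : R) : 0 <= a <= 1 -> INR (fact j) - a <= gamma_tail j a.
Proof.
  intros Ha. pose proof (is_RInt_pow_mul_exp j 0 a) as H. rewrite gamma_tail_0 in H.
  pose proof (is_RInt_le _ _ 0 a _ _ (proj1 Ha) H (is_RInt_const (V := R_NormedModule) 0 a 1)) as L.
  enough (INR (fact j) - gamma_tail j a <= scal (a - 0) 1)
    by (unfold scal in *; simpl in *; unfold mult in *; simpl in *; lra).
  apply L. intros u Hu.
  pose proof (pow_le_1 u j ltac:(lra)). pose proof (pow_le u j ltac:(lra)).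
  assert (exp (- u) <= 1) by (rewrite <- exp_0; apply exp_le_exp; lra).
  pose proof (exp_pos (- u)). nra.
Qed.

Lemma pow_div_fact_le_exp (b : R) (n : nat) : 0 <= b -> b ^ n / INR (fact n) <= exp b.
Proof.
  intros Hb. eapply Rle_trans; [|apply (exp_ge_taylor b n Hb)].
  apply (sum_f_R0_term_le (fun k => b ^ k / INR (fact k)) n n); [|lia].
  intros k. apply Rdiv_le_0_compat; [apply pow_le; lra | apply INR_fact_lt_0].
Qed.

Lemma gamma_tail_poly_le (j : nat) (b : R) : 1 <= b ->
  gamma_tail_poly j b <= INR (fact (S j)) * b ^ j.
Proof.
  intros Hb. induction j as [|j IH]; cbn [gamma_tail_poly]; [simpl; lra|].
  assert (1 <= b ^ j) by (apply pow_R1_Rle; lra).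
  assert (b ^ j <= b ^ S j) by (simpl; nra).
  pose proof (pos_INR (S j)).
  assert (1 <= INR (fact (S j))) by (apply (le_INR 1), lt_O_fact).
  rewrite (INR_fact_succ (S j)), (S_INR (S j)).
  assert (INR (S j) * gamma_tail_poly j b <= INR (S j) * (INR (fact (S j)) * b ^ j))
    by (apply Rmult_le_compat_l; assumption).
  assert (0 <= INR (S j) * INR (fact (S j)) * (b ^ S j - b ^ j))
    by (apply Rmult_le_pos; [apply Rmult_le_pos|]; lra).
  assert (0 <= (INR (fact (S j)) - 1) * b ^ S j) by (apply Rmult_le_pos; lra).
  nra.
Qed.

Lemma gamma_tail_le_inv (j : nat) (b : R) : 1 <= b ->
  gamma_tail j b <= INR (fact (S j)) * INR (fact (S (S j))) / b.
Proof.
  intros Hb. unfold gamma_tail.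
  pose proof (pow_div_fact_le_exp b (S (S j)) ltac:(lra)) as E.
  pose proof (INR_fact_lt_0 (S (S j))).
  pose proof (pow_lt b (S (S j)) ltac:(lra)).
  assert (Hexp : exp (- b) <= INR (fact (S (S j))) / b ^ S (S j)).
  { rewrite exp_Ropp.
    replace (INR (fact (S (S j))) / b ^ S (S j)) with (/ (b ^ S (S j) / INR (fact (S (S j)))))
      by (field; split; lra).
    apply Rinv_le_contravar; [apply Rdiv_lt_0_compat|]; lra. }
  pose proof (gamma_tail_poly_le j b Hb).
  pose proof (gamma_tail_poly_ge0 j b ltac:(lra)).
  pose proof (pow_lt b j ltac:(lra)).
  apply Rle_trans with (INR (fact (S (S j))) / b ^ S (S j) * (INR (fact (S j)) * b ^ j)).
  - apply Rmult_le_compat; [apply Rlt_le, exp_pos | assumption..].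
  - replace (INR (fact (S (S j))) / b ^ S (S j) * (INR (fact (S j)) * b ^ j))
      with (INR (fact (S j)) * INR (fact (S (S j))) / b * / b)
      by (simpl pow; field; split; lra).
    assert (0 < / b <= 1).
    { split; [apply Rinv_0_lt_compat; lra|]. rewrite <- Rinv_1. apply Rinv_le_contravar; lra. }
    assert (0 <= INR (fact (S j)) * INR (fact (S (S j))) / b)
      by (apply Rdiv_le_0_compat; [apply Rmult_le_pos; apply pos_INR | lra]).
    nra.
Qed.

Lemma gamma_tail_eventually_le (j : nat) (d : R) : 0 < d ->
  exists b, 1 <= b /\ gamma_tail j b <= d.
Proof.
  intros Hd. set (K := INR (fact (S j)) * INR (fact (S (S j)))).
  exists (Rmax 1 (K / d)). split; [apply Rmax_l|].
  eapply Rle_trans; [apply gamma_tail_le_inv, Rmax_l|]. fold K.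
  pose proof (Rmax_r 1 (K / d)). pose proof (Rmax_l 1 (K / d)).
  apply Rmult_le_reg_r with (Rmax 1 (K / d)); [lra|].
  replace (K / Rmax 1 (K / d) * Rmax 1 (K / d)) with K by (field; lra).
  apply Rmult_le_reg_r with (/ d); [apply Rinv_0_lt_compat; lra|].
  replace (d * Rmax 1 (K / d) * / d) with (Rmax 1 (K / d)) by (field; lra).
  exact H.
Qed.

Section ImproperIntegral.

Variable f : R -> R.
Hypothesis f_ge0 : forall t, 0 < t -> 0 <= f t.
Hypothesis f_integrable : forall a b, 0 < a -> a <= b -> ex_RInt f a b.

Lemma RInt_le_RInt_wider (a b a' b' : R) : 0 < a' -> a' <= a -> a <= b -> b <= b' ->
  RInt f a b <= RInt f a' b'.
Proof.
  intros Ha' Ha Hab Hb.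
  pose proof (RInt_Chasles f a' a b' (f_integrable a' a Ha' Ha)
    (f_integrable a b' ltac:(lra) ltac:(lra))) as E1.
  pose proof (RInt_Chasles f a b b' (f_integrable a b ltac:(lra) Hab)
    (f_integrable b b' ltac:(lra) Hb)) as E2.
  unfold plus in E1, E2; simpl in E1, E2.
  assert (0 <= RInt f a' a)
    by (apply RInt_ge_0; [exact Ha | apply f_integrable; auto | intros; apply f_ge0; lra]).
  assert (0 <= RInt f b b')
    by (apply RInt_ge_0; [exact Hb | apply f_integrable; lra | intros; apply f_ge0; lra]).
  lra.
Qed.

Lemma is_RInt_gen_sup (M : R) :
  (forall a b, 0 < a -> a <= b -> RInt f a b <= M) ->
  exists S, is_RInt_gen f (at_right 0) (Rbar_locally p_infty) S /\
    forall a b, 0 < a -> a <= b -> RInt f a b <= S.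
Proof.
  intros HM.
  set (E := fun y => exists a b, 0 < a /\ a <= b /\ y = RInt f a b).
  assert (HE : exists y, E y) by (exists (RInt f 1 1), 1, 1; repeat split; lra).
  assert (HB : bound E) by (exists M; intros y [a [b [Ha [Hab ->]]]]; auto).
  destruct (completeness E HB HE) as [S [HS1 HS2]].
  assert (Hup : forall a b, 0 < a -> a <= b -> RInt f a b <= S)
    by (intros a b Ha Hab; apply HS1; exists a, b; auto).
  exists S. split; [|exact Hup].
  intros P [eps HP].
  assert (Hex : exists a0 b0, 0 < a0 /\ a0 <= b0 /\ S - eps < RInt f a0 b0).
  { apply NNPP. intros Hno.
    assert (S <= S - eps); [|destruct eps; simpl in *; lra].
    apply HS2. intros y [a [b [Ha [Hab ->]]]].
    apply Rnot_lt_le. intros Hlt. apply Hno. exists a, b. auto. }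
  destruct Hex as [a0 [b0 [Ha0 [Hab0 Hy]]]].
  apply Filter_prod with (fun a => 0 < a < a0) (fun b => b0 < b).
  - exists (mkposreal a0 Ha0). intros y Hy' Hpos.
    unfold ball in Hy'; simpl in Hy'.
    unfold AbsRing_ball, abs, minus, plus, opp in Hy'; simpl in Hy'.
    rewrite Ropp_0, Rplus_0_r in Hy'. apply Rabs_def2 in Hy'. lra.
  - exists b0. auto.
  - intros a b [Ha1 Ha2] Hb. exists (RInt f a b). split.
    + exact (RInt_correct _ _ _ (f_integrable a b ltac:(lra) ltac:(lra))).
    + apply HP. unfold ball; simpl. unfold AbsRing_ball, abs, minus, plus, opp; simpl.
      pose proof (RInt_le_RInt_wider a0 b0 a b Ha1 ltac:(lra) Hab0 ltac:(lra)).
      pose proof (Hup a b Ha1 ltac:(lra)).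
      apply Rabs_def1; destruct eps; simpl in *; lra.
Qed.

End ImproperIntegral.

Definition gamma_integrand (x t : R) : R := Rpower t (x - 1) * exp (- t).

Lemma gamma_integrand_ge0 (x t : R) : 0 <= gamma_integrand x t.
Proof. apply Rlt_le, Rmult_lt_0_compat; apply exp_pos. Qed.

Lemma ex_RInt_gamma_integrand (x a b : R) : 0 < a -> a <= b -> ex_RInt (gamma_integrand x) a b.
Proof.
  intros Ha Hab. apply (ex_RInt_continuous (V := R_CompleteNormedModule)). intros z Hz.
  rewrite Rmin_left in Hz by lra.
  apply continuous_of_ex_derive. unfold gamma_integrand, Rpower. auto_derive. lra.
Qed.

Lemma Rpower_sub1_split (x t : R) (N : nat) : (1 <= N)%nat -> 0 < t ->
  Rpower t (x - 1) = t ^ (N - 1) * Rpower t (x - INR N).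
Proof.
  intros HN Ht. rewrite <- Rpower_pow, <- Rpower_plus by exact Ht.
  f_equal. rewrite minus_INR by lia. simpl. ring.
Qed.

(* Convexity of [t |-> t^s] for [s <= 0]. *)
Lemma Rpower_ge_tangent (t s c : R) : 0 < c -> 0 < t -> s <= 0 ->
  Rpower c s * ((1 - s) + s / c * t) <= Rpower t s.
Proof.
  intros Hc Ht Hs.
  replace (Rpower t s) with (Rpower c s * Rpower (t / c) s)
    by (rewrite Rpower_mult_distr by (try apply Rdiv_lt_0_compat; lra); f_equal; field; lra).
  apply Rmult_le_compat_l; [apply Rlt_le, exp_pos|].
  unfold Rpower. eapply Rle_trans; [|apply exp_ineq1_le].
  pose proof (ln_le_sub1 (t / c) ltac:(apply Rdiv_lt_0_compat; lra)).
  assert (s * ln (t / c) >= s * (t / c - 1)) by nra.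
  unfold Rdiv in *. lra.
Qed.

Lemma Rpower_le_1_add_inv (t s : R) : 0 < t -> -1 <= s <= 0 -> Rpower t s <= 1 + / t.
Proof.
  intros Ht Hs. unfold Rpower. pose proof (Rinv_0_lt_compat t Ht).
  destruct (Rle_or_lt 1 t).
  - assert (0 <= ln t) by (rewrite <- ln_1; apply ln_le; lra).
    assert (exp (s * ln t) <= exp 0) by (apply exp_le_exp; nra).
    rewrite exp_0 in *. lra.
  - assert (ln t < 0) by (rewrite <- ln_1; apply ln_increasing; lra).
    assert (exp (s * ln t) <= exp (- ln t)) by (apply exp_le_exp; nra).
    rewrite <- ln_Rinv, exp_ln in * by lra. lra.
Qed.

Section GammaLowerBound.

Variables (x : R) (N : nat).
Hypothesis N_ge1 : (1 <= N)%nat.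
Hypothesis x_gt : INR N - 1 < x.
Hypothesis x_le : x <= INR N.
Hypothesis x_ge1 : 1 <= x.

Lemma gamma_integrand_le (t : R) : 0 < t ->
  gamma_integrand x t <= t ^ (N - 1) * exp (- t) + t ^ pred (N - 1) * exp (- t).
Proof.
  intros Ht. unfold gamma_integrand. rewrite (Rpower_sub1_split x t N N_ge1 Ht).
  pose proof (exp_pos (- t)). pose proof (pow_le t (pred (N - 1)) ltac:(lra)).
  destruct (Nat.eq_dec N 1) as [->|HN1].
  { simpl in *. replace (x - 1) with 0 by lra. rewrite Rpower_O by exact Ht. lra. }
  pose proof (Rpower_le_1_add_inv t (x - INR N) Ht ltac:(lra)).
  set (j := pred (N - 1)) in *.
  replace (N - 1)%nat with (S j) by (unfold j; lia). simpl pow.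
  assert (Htt : t * / t = 1) by (field; lra).
  assert (0 <= t * t ^ j) by (apply Rmult_le_pos; lra).
  apply Rle_trans with (t * t ^ j * (1 + / t) * exp (- t)).
  - apply Rmult_le_compat_r; [lra|]. apply Rmult_le_compat_l; lra.
  - right. replace (t * t ^ j * (1 + / t)) with (t * t ^ j + t ^ j * (t * / t)) by ring.
    rewrite Htt. ring.
Qed.

Lemma RInt_gamma_integrand_le (a b : R) : 0 < a -> a <= b ->
  RInt (gamma_integrand x) a b <= INR (fact (N - 1)) + INR (fact (pred (N - 1))).
Proof.
  intros Ha Hab.
  pose proof (is_RInt_plus _ _ a b _ _
    (is_RInt_pow_mul_exp (N - 1) a b) (is_RInt_pow_mul_exp (pred (N - 1)) a b)) as Hh.
  pose proof (is_RInt_le _ _ a b _ _ Hab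
    (RInt_correct _ _ _ (ex_RInt_gamma_integrand x a b Ha Hab)) Hh) as L.
  pose proof (gamma_tail_decr (N - 1) 0 a ltac:(lra) ltac:(lra)).
  pose proof (gamma_tail_decr (pred (N - 1)) 0 a ltac:(lra) ltac:(lra)).
  pose proof (gamma_tail_ge0 (N - 1) b ltac:(lra)).
  pose proof (gamma_tail_ge0 (pred (N - 1)) b ltac:(lra)).
  rewrite !gamma_tail_0 in *.
  enough (RInt (gamma_integrand x) a b
    <= plus (gamma_tail (N - 1) a - gamma_tail (N - 1) b)
            (gamma_tail (pred (N - 1)) a - gamma_tail (pred (N - 1)) b))
    by (unfold plus in *; simpl in *; lra).
  apply L. intros u Hu. apply gamma_integrand_le. lra.
Qed.

Lemma gamma_integrand_ge_tangent (u : R) : 0 < u ->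
  Rpower (INR N) (x - INR N) * (1 - (x - INR N)) * (u ^ (N - 1) * exp (- u))
  + Rpower (INR N) (x - INR N) * ((x - INR N) / INR N) * (u ^ S (N - 1) * exp (- u))
  <= gamma_integrand x u.
Proof.
  intros Hu. assert (HN0 : 0 < INR N) by (apply lt_0_INR; lia).
  unfold gamma_integrand. rewrite (Rpower_sub1_split x u N N_ge1 Hu).
  pose proof (Rpower_ge_tangent u (x - INR N) (INR N) HN0 Hu ltac:(lra)).
  assert (0 <= u ^ (N - 1) * exp (- u))
    by (apply Rmult_le_pos; [apply pow_le; lra | apply Rlt_le, exp_pos]).
  apply Rle_trans with (u ^ (N - 1) * exp (- u) *
    (Rpower (INR N) (x - INR N) * ((1 - (x - INR N)) + (x - INR N) / INR N * u))).
  - right. simpl. field. lra.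
  - replace (u ^ (N - 1) * Rpower u (x - INR N) * exp (- u))
      with (u ^ (N - 1) * exp (- u) * Rpower u (x - INR N)) by ring.
    apply Rmult_le_compat_l; assumption.
Qed.

(* Over (0, oo) the left-hand side of [gamma_integrand_ge_tangent] integrates to
   exactly N^(x-N) (N-1)!; on [a, b] the loss is controlled by [a] and by the tail
   beyond [b]. *)
Lemma RInt_gamma_integrand_ge (a b : R) : 0 < a <= 1 -> 1 <= b ->
  Rpower (INR N) (x - INR N) * INR (fact (N - 1))
  - Rpower (INR N) (x - INR N) * (1 - (x - INR N)) * (a + gamma_tail (N - 1) b)
  <= RInt (gamma_integrand x) a b.
Proof.
  intros Ha Hb.
  set (j := (N - 1)%nat). set (s := x - INR N).
  assert (HN0 : 0 < INR N) by (apply lt_0_INR; lia).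
  set (p := Rpower (INR N) s).
  assert (Hp : 0 < p) by apply exp_pos.
  set (c1 := p * (1 - s)). set (c2 := p * (s / INR N)).
  assert (Hab : a <= b) by lra.
  assert (I : c1 * (gamma_tail j a - gamma_tail j b) + c2 * (gamma_tail (S j) a - gamma_tail (S j) b)
              <= RInt (gamma_integrand x) a b).
  { apply (is_RInt_le _ _ a b _ _ Hab
      (is_RInt_plus _ _ a b _ _ (is_RInt_scal _ a b c1 _ (is_RInt_pow_mul_exp j a b))
        (is_RInt_scal _ a b c2 _ (is_RInt_pow_mul_exp (S j) a b)))
      (RInt_correct _ _ _ (ex_RInt_gamma_integrand x a b (proj1 Ha) Hab))).
    intros u Hu. unfold plus, scal; simpl; unfold mult; simpl.
    apply gamma_integrand_ge_tangent. lra. }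
  pose proof (gamma_tail_ge_near0 j a ltac:(lra)).
  pose proof (gamma_tail_decr (S j) 0 a ltac:(lra) ltac:(lra)) as Hq2.
  rewrite gamma_tail_0 in Hq2.
  pose proof (gamma_tail_ge0 (S j) b ltac:(lra)).
  assert (Ef : INR (fact (S j)) = INR N * INR (fact j)).
  { rewrite INR_fact_succ. do 2 f_equal. unfold j. lia. }
  assert (0 <= c1) by (unfold c1, s; apply Rmult_le_pos; lra).
  assert (c2 <= 0).
  { unfold c2, s. pose proof (Rinv_0_lt_compat _ HN0). unfold Rdiv.
    assert ((x - INR N) * / INR N <= 0) by nra. nra. }
  assert (c2 * gamma_tail (S j) a >= c2 * INR (fact (S j))) by nra.
  assert (c2 * gamma_tail (S j) b <= 0) by nra.
  assert (c1 * gamma_tail j a >= c1 * (INR (fact j) - a)) by nra.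
  assert (c2 * INR (fact (S j)) = p * s * INR (fact j)) by (rewrite Ef; unfold c2; field; lra).
  unfold c1 in *. nra.
Qed.

Lemma Gamma_ge : Rpower (INR N) (x - INR N) * INR (fact (N - 1)) <= Gamma x.
Proof.
  destruct (is_RInt_gen_sup (gamma_integrand x) (fun t _ => gamma_integrand_ge0 x t)
    (ex_RInt_gamma_integrand x) _ RInt_gamma_integrand_le) as [S [HS Hup]].
  replace (Gamma x) with S by (symmetry; exact (is_RInt_gen_unique _ _ HS)).
  set (c := Rpower (INR N) (x - INR N) * (1 - (x - INR N))).
  assert (Hc : 0 <= c) by (apply Rmult_le_pos; [apply Rlt_le, exp_pos | lra]).
  apply Rle_plus_epsilon. intros eps Heps.
  set (d := Rmin 1 (eps / (2 * c + 1))).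
  assert (Hd : 0 < d <= 1)
    by (split; [apply Rmin_case; [lra | apply Rdiv_lt_0_compat; lra] | apply Rmin_l]).
  assert (Hcd : 2 * c * d <= eps).
  { apply Rle_trans with (2 * c * (eps / (2 * c + 1)));
      [apply Rmult_le_compat_l; [lra | apply Rmin_r]|].
    apply Rmult_le_reg_r with (2 * c + 1); [lra|].
    replace (2 * c * (eps / (2 * c + 1)) * (2 * c + 1)) with (2 * c * eps) by (field; lra).
    nra. }
  destruct (gamma_tail_eventually_le (N - 1) d (proj1 Hd)) as [b [Hb1 Hbd]].
  pose proof (RInt_gamma_integrand_ge d b Hd Hb1) as L. fold c in L.
  pose proof (Hup d b (proj1 Hd) ltac:(lra)).
  assert (c * (d + gamma_tail (N - 1) b) <= c * (2 * d)) by (apply Rmult_le_compat_l; lra).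
  lra.
Qed.

End GammaLowerBound.

(** * The Gamma-ratio factor *)

Lemma ceil_div_bounds (m k : nat) : (1 <= k)%nat -> (k <= m)%nat ->
  (1 <= (m + k - 1) / k)%nat /\ (((m + k - 1) / k - 1) * k < m)%nat /\
  (m <= (m + k - 1) / k * k)%nat /\ ((m + k - 1) / k * k <= m + k - 1)%nat.
Proof.
  intros Hk Hkm.
  pose proof (Nat.div_mod_eq (m + k - 1) k) as Hd.
  pose proof (Nat.mod_upper_bound (m + k - 1) k ltac:(lia)).
  set (N := ((m + k - 1) / k)%nat) in *.
  set (r := ((m + k - 1) mod k)%nat) in *.
  destruct N as [|N']; [nia|].
  replace (S N' - 1)%nat with N' by lia. nia.
Qed.

Lemma ln_Gamma_ge (m k N : nat) : (1 <= k)%nat -> (k <= m)%nat ->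
  ((N - 1) * k < m)%nat -> (m <= N * k)%nat ->
  0 < Gamma (INR m / INR k) /\
  INR k * ln (INR (fact (N - 1))) + (INR m - INR (N * k)) * ln (INR N)
  <= INR k * ln (Gamma (INR m / INR k)).
Proof.
  intros Hk Hkm H1 H2.
  assert (Hk0 : 0 < INR k) by (apply lt_0_INR; lia).
  assert (HN : (1 <= N)%nat) by nia.
  set (x := INR m / INR k).
  assert (Ex : INR m = x * INR k) by (unfold x; field; lra).
  apply lt_INR in H1. apply le_INR in H2. apply le_INR in Hkm.
  rewrite mult_INR, minus_INR in H1 by lia. rewrite mult_INR in *. simpl INR in H1.
  pose proof (Gamma_ge x N HN ltac:(nra) ltac:(nra) ltac:(nra)) as G.
  assert (Hp : 0 < Rpower (INR N) (x - INR N) * INR (fact (N - 1)))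
    by (apply Rmult_lt_0_compat; [apply exp_pos | apply INR_fact_lt_0]).
  split; [lra|].
  apply ln_le in G; [|exact Hp].
  rewrite ln_mult, ln_Rpower in G by (try apply exp_pos; apply INR_fact_lt_0).
  apply Rmult_le_compat_l with (r := INR k) in G; [|lra].
  rewrite Ex. nra.
Qed.

Lemma ln_stirling_quotient_le (m k N : nat) :
  (1 <= k)%nat -> (1 <= m)%nat -> (1 <= N)%nat -> (m <= N * k)%nat ->
  ln (INR (fact m)) + INR (N * k) * ln (INR N) - INR k * ln (INR (fact (N - 1)))
    - INR m * ln (INR N) - INR m * ln (INR k)
  <= 1 + ln (INR m) + (INR N * INR k - INR m)^2 / (INR N * INR k)
     + INR k / 2 * ln (INR N) - 11/12 * INR k.
Proof.
  intros Hk Hm HN Hmk.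
  assert (Hk0 : 0 < INR k) by (apply lt_0_INR; lia).
  assert (Hm0 : 0 < INR m) by (apply lt_0_INR; lia).
  assert (HN0 : 0 < INR N) by (apply lt_0_INR; lia).
  pose proof (ln_fact_le m Hm).
  pose proof (ln_fact_pred_ge N HN).
  assert (C : ln (INR m) - ln (INR N) - ln (INR k) <= INR m / (INR N * INR k) - 1).
  { rewrite <- ln_div, <- ln_div by (try apply Rdiv_lt_0_compat; lra).
    replace (INR m / INR N / INR k) with (INR m / (INR N * INR k)) by (field; lra).
    apply ln_le_sub1, Rdiv_lt_0_compat; [lra | apply Rmult_lt_0_compat; lra]. }
  rewrite mult_INR.
  assert (INR m * (ln (INR m) - ln (INR N) - ln (INR k))
          <= INR m * (INR m / (INR N * INR k) - 1)) by (apply Rmult_le_compat_l; lra).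
  replace ((INR N * INR k - INR m)^2 / (INR N * INR k))
    with (INR m * (INR m / (INR N * INR k)) - 2 * INR m + INR N * INR k) by (field; lra).
  assert (INR k * (11/6 + (2 * INR N - 1) * ln (INR N) - 2 * INR N)
          <= INR k * (2 * ln (INR (fact (N - 1))))) by (apply Rmult_le_compat_l; lra).
  nra.
Qed.

Lemma binomial_C_pred_le (m k : nat) : (1 <= k)%nat -> (k <= m)%nat ->
  Binomial.C (m - 1) (k - 1) <= Binomial.C m k.
Proof.
  intros Hk Hkm. destruct m as [|m]; [lia|]. destruct k as [|k]; [lia|].
  replace (S m - 1)%nat with m by lia. replace (S k - 1)%nat with k by lia.
  unfold Binomial.C. replace (S m - S k)%nat with (m - k)%nat by lia.
  rewrite !INR_fact_succ.
  pose proof (INR_fact_lt_0 m). pose proof (INR_fact_lt_0 k). pose proof (INR_fact_lt_0 (m - k)).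
  assert (INR (S k) <= INR (S m)) by (apply le_INR; lia).
  assert (0 < INR (S k)) by (apply lt_0_INR; lia).
  replace (INR (S m) * INR (fact m) / (INR (S k) * INR (fact k) * INR (fact (m - k))))
    with (INR (S m) / INR (S k) * (INR (fact m) / (INR (fact k) * INR (fact (m - k)))))
    by (field; lra).
  assert (0 < INR (fact m) / (INR (fact k) * INR (fact (m - k))))
    by (apply Rdiv_lt_0_compat; nra).
  assert (1 <= INR (S m) / INR (S k)).
  { apply Rmult_le_reg_r with (INR (S k)); [lra|].
    replace (INR (S m) / INR (S k) * INR (S k)) with (INR (S m)) by (field; lra). lra. }
  nra.
Qed.

Lemma binomial_C_mul_fact_le_pow (m k : nat) : (k <= m)%nat ->
  Binomial.C m k * INR (fact k) <= INR m ^ k.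
Proof.
  intros Hkm. pose proof (INR_fact_lt_0 k). pose proof (INR_fact_lt_0 (m - k)).
  unfold Binomial.C.
  replace (INR (fact m) / (INR (fact k) * INR (fact (m - k))) * INR (fact k))
    with (INR (fact m) / INR (fact (m - k))) by (field; lra).
  apply Rmult_le_reg_r with (INR (fact (m - k))); [lra|].
  replace (INR (fact m) / INR (fact (m - k)) * INR (fact (m - k))) with (INR (fact m))
    by (field; lra).
  clear H H0. induction k as [|k IH].
  - simpl. rewrite Nat.sub_0_r. lra.
  - specialize (IH ltac:(lia)).
    replace (fact (m - k)) with ((m - k) * fact (m - S k))%nat in IH
      by (replace (m - k)%nat with (S (m - S k)) by lia; reflexivity).
    rewrite mult_INR in IH.
    assert (INR (m - k) <= INR m) by (apply le_INR; lia).
    pose proof (pos_INR (fact (m - S k))). pose proof (pow_le (INR m) k (pos_INR m)).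
    assert (0 <= INR m ^ k * INR (fact (m - S k)) * (INR m - INR (m - k)))
      by (apply Rmult_le_pos; [apply Rmult_le_pos|]; lra).
    simpl. nra.
Qed.

Lemma binomial_C_le_pow2 (n k : nat) : (k <= n)%nat -> Binomial.C n k <= 2 ^ n.
Proof.
  intros Hkn. pose proof (binomial_term_le_1 n k (1/2) ltac:(lra) Hkn) as B.
  replace (1 - 1/2) with (1/2) in B by field. rewrite Rmult_assoc, <- pow_add in B.
  replace (k + (n - k))%nat with n in B by lia.
  pose proof (pow_lt (1/2) n ltac:(lra)).
  apply Rmult_le_reg_r with ((1/2) ^ n); [lra|].
  rewrite <- Rpow_mult_distr. replace (2 * (1/2)) with 1 by field. rewrite pow1. lra.
Qed.

Lemma binomial_C_le_3_2_pow (m k : nat) : (k <= m)%nat ->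
  Binomial.C m k <= (3/2) ^ m * 2 ^ k.
Proof.
  intros Hkm. pose proof (binomial_term_le_1 m k (1/3) ltac:(lra) Hkm) as B.
  pose proof (pow_lt 3 k ltac:(lra)). pose proof (pow_lt (3/2) (m - k) ltac:(lra)).
  replace ((3/2) ^ m * 2 ^ k) with (3 ^ k * (3/2) ^ (m - k)).
  - replace (1/3) with (/ 3) in B by field. replace (1 - / 3) with (/ (3/2)) in B by field.
    rewrite !pow_inv in B.
    apply Rmult_le_reg_r with (/ 3 ^ k * / (3/2) ^ (m - k));
      [apply Rmult_lt_0_compat; apply Rinv_0_lt_compat; lra|].
    replace (3 ^ k * (3/2) ^ (m - k) * (/ 3 ^ k * / (3/2) ^ (m - k))) with 1 by (field; lra).
    rewrite <- Rmult_assoc. exact B.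
  - replace m with (k + (m - k))%nat at 2 by lia. rewrite pow_add.
    replace (3 ^ k) with ((3/2) ^ k * 2 ^ k) by (rewrite <- Rpow_mult_distr; f_equal; field).
    ring.
Qed.

Lemma ln_binomial_C_pred_le_pow2 (m k : nat) : (1 <= k)%nat -> (k <= m)%nat ->
  ln (Binomial.C (m - 1) (k - 1)) <= INR m * ln 2.
Proof.
  intros Hk Hkm. pose proof (binomial_C_pos (m - 1) (k - 1)).
  rewrite <- ln_pow_lt by lra. apply ln_le; [lra|].
  apply Rle_trans with (2 ^ (m - 1)); [apply binomial_C_le_pow2; lia|].
  apply Rle_pow; [lra | lia].
Qed.

Lemma ln_binomial_C_pred_le_3_2_pow (m k : nat) : (1 <= k)%nat -> (k <= m)%nat ->
  ln (Binomial.C (m - 1) (k - 1)) <= INR m * ln (3/2) + INR k * ln 2.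
Proof.
  intros Hk Hkm. pose proof (binomial_C_pos (m - 1) (k - 1)).
  rewrite <- !ln_pow_lt, <- ln_mult by (try apply pow_lt; lra). apply ln_le; [lra|].
  eapply Rle_trans; [apply binomial_C_pred_le; lia|]. now apply binomial_C_le_3_2_pow.
Qed.

Lemma ln_3_2_le : ln (3/2) <= 5/12.
Proof.
  pose proof (ln_le_half_sub_inv (3/2) ltac:(lra)) as L.
  replace ((3/2 - / (3/2)) / 2) with (5/12) in L by field. exact L.
Qed.

Lemma ln2_sub_ln_3_2_ge : 0.287 <= ln 2 - ln (3/2).
Proof.
  rewrite <- ln_div by lra. replace (2 / (3/2)) with (1 + 1/3) by field.
  eapply Rle_trans; [|apply ln_1p_ge_taylor4; lra]. lra.
Qed.

Definition gamma_ratio (m k : nat) : R :=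
  Binomial.C (m - 1) (k - 1) * (INR (fact m) / Gamma (INR m / INR k) ^ k) / INR k ^ m.

(* The summands dominate [1 + ln m - m/2000] and
   [k/2 (5 + ln m - 3 ln k) - m/2000] (see [half_mul_ln_le]). *)
Definition gamma_ratio_const : R := ln 2000 + exp (3 + ln 1000) / 2.

Lemma one_add_ln_le (m : R) : 0 < m -> 1 + ln m <= m / 2000 + ln 2000.
Proof.
  intros Hm. pose proof (ln_le_sub1 (m / 2000) ltac:(lra)) as H.
  rewrite ln_div in H by lra. lra.
Qed.

Lemma half_mul_ln_le (m k : R) : 1 <= k -> 0 < m ->
  k / 2 * (5 + ln m - 3 * ln k) <= m / 2000 + exp (3 + ln 1000) / 2.
Proof.
  intros Hk Hm. set (c := exp (3 + ln 1000)).
  assert (Hc : 0 < c) by apply exp_pos.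
  assert (Hlc : ln c = 3 + ln 1000) by apply ln_exp.
  assert (Hk2 : 0 < 1000 * k ^ 2) by (apply Rmult_lt_0_compat; [lra | apply pow_lt; lra]).
  assert (S1 : ln m <= ln 1000 + 2 * ln k + m / (1000 * k ^ 2) - 1).
  { pose proof (ln_le_sub1 (m / (1000 * k^2)) ltac:(apply Rdiv_lt_0_compat; lra)) as H.
    rewrite ln_div, ln_mult, ln_pow_lt in H by (try apply pow_lt; lra). simpl INR in H. lra. }
  assert (S2 : ln c + 1 - c / k <= ln k).
  { pose proof (ln_ge_1_sub_inv (k / c) ltac:(apply Rdiv_lt_0_compat; lra)) as H.
    rewrite ln_div in H by lra. replace (/ (k / c)) with (c / k) in H by (field; lra). lra. }
  assert (E1 : k / 2 * (m / (1000 * k^2)) = m / (2000 * k)) by (field; lra).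
  assert (E2 : k / 2 * (c / k) = c / 2) by (field; lra).
  assert (m / (2000 * k) <= m / 2000)
    by (unfold Rdiv; apply Rmult_le_compat_l; [lra | apply Rinv_le_contravar; lra]).
  assert (k / 2 * ln m <= k / 2 * (ln 1000 + 2 * ln k + m / (1000 * k ^ 2) - 1))
    by (apply Rmult_le_compat_l; lra).
  assert (k / 2 * (ln c + 1 - c / k) <= k / 2 * ln k) by (apply Rmult_le_compat_l; lra).
  rewrite Hlc in *. nra.
Qed.

Section GammaRatio.

Variables m k : nat.
Hypothesis k_ge2 : (2 <= k)%nat.
Hypothesis k_le_m : (k <= m)%nat.

Let N := ((m + k - 1) / k)%nat.
Let D := (INR N * INR k - INR m) ^ 2 / (INR N * INR k).

Let N_ge1 : (1 <= N)%nat. Proof. exact (proj1 (ceil_div_bounds m k ltac:(lia) k_le_m)). Qed.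
Let m_gt : (INR N - 1) * INR k < INR m.
Proof.
  destruct (ceil_div_bounds m k ltac:(lia) k_le_m) as [_ [H _]]. fold N in H.
  apply lt_INR in H. rewrite mult_INR, minus_INR in H by exact N_ge1. simpl in H. lra.
Qed.
Let m_le : INR m <= INR N * INR k.
Proof.
  destruct (ceil_div_bounds m k ltac:(lia) k_le_m) as [_ [_ [H _]]]. fold N in H.
  rewrite <- mult_INR. now apply le_INR.
Qed.

Let k_pos : 2 <= INR k. Proof. apply (le_INR 2); lia. Qed.
Let k_le : INR k <= INR m. Proof. now apply le_INR. Qed.
Let N_pos : 1 <= INR N. Proof. apply (le_INR 1), N_ge1. Qed.

Lemma defect_le : 0 <= D <= INR k / INR N.
Proof.
  pose proof k_pos. pose proof N_pos. pose proof m_le.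
  unfold D. split; [apply Rdiv_le_0_compat; [apply pow2_ge_0 | nra]|].
  apply Rmult_le_reg_r with (INR N * INR k); [nra|].
  replace ((INR N * INR k - INR m) ^ 2 / (INR N * INR k) * (INR N * INR k))
    with ((INR N * INR k - INR m) ^ 2) by (field; nra).
  replace (INR k / INR N * (INR N * INR k)) with (INR k * INR k) by (field; lra).
  nra.
Qed.

Lemma ln_gamma_ratio_le : 0 < gamma_ratio m k /\
  ln (gamma_ratio m k) <= ln (Binomial.C (m - 1) (k - 1)) + 1 + ln (INR m) + D
                          + INR k / 2 * ln (INR N) - 11/12 * INR k.
Proof.
  destruct (ceil_div_bounds m k ltac:(lia) k_le_m) as [HN [H1 [H2 _]]]. fold N in HN, H1, H2.
  destruct (ln_Gamma_ge m k N ltac:(lia) k_le_m H1 H2) as [HG HGl].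
  pose proof (ln_stirling_quotient_le m k N ltac:(lia) ltac:(lia) HN H2) as LR.
  pose proof (binomial_C_pos (m - 1) (k - 1)). pose proof (INR_fact_lt_0 m).
  pose proof k_pos. pose proof (pow_lt _ k HG). pose proof (pow_lt (INR k) m ltac:(lra)).
  assert (0 < gamma_ratio m k)
    by (apply Rdiv_lt_0_compat; [apply Rmult_lt_0_compat; [|apply Rdiv_lt_0_compat]|]; lra).
  split; [assumption|].
  unfold gamma_ratio.
  assert (0 < INR (fact m) / Gamma (INR m / INR k) ^ k) by (apply Rdiv_lt_0_compat; lra).
  rewrite ln_div, ln_mult, ln_div, !ln_pow_lt by (first [lra | apply Rmult_lt_0_compat; lra]).
  rewrite mult_INR in LR, HGl. fold D in LR. lra.
Qed.

Lemma gamma_ratio_le_pow :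
  gamma_ratio m k <= exp gamma_ratio_const * exp (INR m / 1000) * INR m ^ k.
Proof.
  destruct ln_gamma_ratio_le as [HY HlnY].
  pose proof k_pos. pose proof k_le. pose proof N_pos.
  destruct (ceil_div_bounds m k ltac:(lia) k_le_m) as [_ [_ [_ H4]]]. fold N in H4.
  apply le_of_ln_le; [exact HY | repeat apply Rmult_lt_0_compat; try apply exp_pos; apply pow_lt; lra|].
  rewrite !ln_mult, !ln_exp, ln_pow_lt by (try apply Rmult_lt_0_compat; try apply exp_pos;
    try apply pow_lt; lra).
  pose proof (binomial_C_pos (m - 1) (k - 1)).
  pose proof (binomial_C_pred_le m k ltac:(lia) k_le_m).
  pose proof (binomial_C_mul_fact_le_pow m k k_le_m).
  pose proof (INR_fact_lt_0 k).
  assert (ln (Binomial.C (m - 1) (k - 1)) <= INR k * ln (INR m) - ln (INR (fact k))).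
  { rewrite <- ln_pow_lt, <- ln_div by (try apply pow_lt; lra). apply ln_le; [lra|].
    apply Rmult_le_reg_r with (INR (fact k)); [lra|].
    replace (INR m ^ k / INR (fact k) * INR (fact k)) with (INR m ^ k) by (field; lra). nra. }
  pose proof (ln_fact_ge_weak k ltac:(lia)).
  assert (HNle : INR N <= 2 * INR m / INR k).
  { apply Rmult_le_reg_r with (INR k); [lra|].
    replace (2 * INR m / INR k * INR k) with (2 * INR m) by (field; lra).
    apply le_INR in H4. rewrite mult_INR, minus_INR, plus_INR in H4 by lia. simpl in H4. lra. }
  assert (ln (INR N) <= ln 2 + ln (INR m) - ln (INR k)).
  { rewrite <- ln_mult, <- ln_div by lra. apply ln_le; lra. }
  assert (D <= INR k).
  { apply Rle_trans with (INR k / INR N); [apply defect_le|].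
    apply Rmult_le_reg_r with (INR N); [lra|].
    replace (INR k / INR N * INR N) with (INR k) by (field; lra). nra. }
  pose proof (half_mul_ln_le (INR m) (INR k) ltac:(lra) ltac:(lra)).
  pose proof (one_add_ln_le (INR m) ltac:(lra)).
  pose proof defect_le. pose proof ln2_le.
  assert (INR k / 2 * ln (INR N) <= INR k / 2 * (ln 2 + ln (INR m) - ln (INR k)))
    by (apply Rmult_le_compat_l; lra).
  assert (INR k * ln 2 <= INR k * 0.6935) by (apply Rmult_le_compat_l; lra).
  unfold gamma_ratio_const. lra.
Qed.

Lemma ln_binomial_add_defect_le :
  ln (Binomial.C (m - 1) (k - 1)) + D + INR k / 2 * ln (INR N) - 11/12 * INR k
  <= INR m * ln 2.
Proof.
  pose proof k_pos. pose proof k_le. pose proof N_pos. pose proof m_gt.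
  pose proof defect_le. pose proof ln2_le.
  assert (INR k * ln 2 <= INR k * 0.6935) by (apply Rmult_le_compat_l; lra).
  destruct (le_lt_dec N 3) as [HN3|HN4].
  - pose proof (ln_binomial_C_pred_le_pow2 m k ltac:(lia) k_le_m).
    pose proof N_ge1. pose proof m_le.
    assert (N = 1 \/ N = 2 \/ N = 3)%nat as [E|[E|E]] by lia.
    + assert (HN : INR N = 1) by (rewrite E; reflexivity).
      assert (D = 0).
      { unfold D. rewrite HN in *. replace (INR m) with (INR k) by lra. field. lra. }
      rewrite HN, ln_1. lra.
    + assert (HN : INR N = 2) by (rewrite E; simpl; ring). rewrite HN in *.
      assert (INR k / 2 * ln 2 <= INR k / 2 * 0.6935) by (apply Rmult_le_compat_l; lra).
      lra.
    + assert (HN : INR N = 2 * (3/2)) by (rewrite E; simpl; field). rewrite HN in *.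
      rewrite ln_mult by lra. pose proof ln_3_2_le.
      assert (INR k / 2 * (ln 2 + ln (3/2)) <= INR k / 2 * (0.6935 + 5/12))
        by (apply Rmult_le_compat_l; lra).
      lra.
  - apply (le_INR 4) in HN4. simpl INR in HN4.
    assert (D <= INR k / 4).
    { apply Rle_trans with (INR k / INR N); [apply defect_le|].
      unfold Rdiv. apply Rmult_le_compat_l; [lra|]. apply Rinv_le_contravar; lra. }
    pose proof (ln_binomial_C_pred_le_3_2_pow m k ltac:(lia) k_le_m).
    pose proof ln2_sub_ln_3_2_ge.
    assert (ln (INR N) <= 2 * ln 2 + INR N / 4 - 1).
    { pose proof (ln_le_sub1 (INR N / 4) ltac:(lra)) as L.
      rewrite ln_div in L by lra. replace 4 with (2 * 2) in L at 1 by ring.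
      rewrite ln_mult in L by lra. lra. }
    assert (INR k / 2 * ln (INR N) <= INR k / 2 * (2 * ln 2 + INR N / 4 - 1))
      by (apply Rmult_le_compat_l; lra).
    assert (INR m * 0.287 <= INR m * (ln 2 - ln (3/2))) by (apply Rmult_le_compat_l; lra).
    nra.
Qed.

Lemma gamma_ratio_le_pow2 :
  gamma_ratio m k <= exp gamma_ratio_const * exp (INR m / 1000) * 2 ^ m.
Proof.
  destruct ln_gamma_ratio_le as [HY HlnY].
  pose proof k_le. pose proof k_pos.
  apply le_of_ln_le; [exact HY | repeat apply Rmult_lt_0_compat; try apply exp_pos; apply pow_lt; lra|].
  rewrite !ln_mult, !ln_exp, ln_pow_lt by (try apply Rmult_lt_0_compat; try apply exp_pos;
    try apply pow_lt; lra).
  pose proof ln_binomial_add_defect_le.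
  pose proof (one_add_ln_le (INR m) ltac:(lra)).
  assert (ln 2000 <= gamma_ratio_const)
    by (unfold gamma_ratio_const; pose proof (exp_pos (3 + ln 1000)); lra).
  simpl INR. lra.
Qed.

End GammaRatio.

Lemma gamma_ratio_le (m k : nat) : (2 <= k)%nat -> (k <= m)%nat ->
  gamma_ratio m k <= exp gamma_ratio_const * exp (INR m / 1000) * Rmin (INR m ^ k) (2 ^ m).
Proof.
  intros Hk Hkm. apply Rmin_case.
  - exact (gamma_ratio_le_pow m k Hk Hkm).
  - exact (gamma_ratio_le_pow2 m k Hk Hkm).
Qed.

Lemma pow_le_pow_le_1 (q : R) (a b : nat) : 0 <= q <= 1 -> (a <= b)%nat -> q ^ b <= q ^ a.
Proof.
  intros Hq Hab. replace b with (a + (b - a))%nat by lia. rewrite pow_add.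
  pose proof (pow_le q a ltac:(lra)). pose proof (pow_le_1 q (b - a) Hq). nra.
Qed.

Lemma ratio_pow_le (n m k r : nat) : (1 <= m)%nat -> (m <= n)%nat -> (1 <= k)%nat ->
  (2 <= r)%nat ->
  (INR m / (INR k * INR n)) ^ (m * r)
  <= (INR m / INR n) ^ (2 * m) / INR k ^ m * (/ INR k ^ (r - 1)) ^ m.
Proof.
  intros Hm Hmn Hk Hr.
  assert (Hk0 : 0 < INR k) by (apply lt_0_INR; lia).
  assert (Hn0 : 0 < INR n) by (apply lt_0_INR; lia).
  assert (Hu : 0 < INR m / INR n <= 1).
  { split; [apply Rdiv_lt_0_compat; [apply lt_0_INR; lia | lra]|].
    apply Rmult_le_reg_r with (INR n); [lra|].
    replace (INR m / INR n * INR n) with (INR m) by (field; lra).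
    rewrite Rmult_1_l. now apply le_INR. }
  replace (INR m / (INR k * INR n)) with (INR m / INR n * / INR k) by (field; lra).
  rewrite Rpow_mult_distr.
  replace (/ INR k ^ (r - 1)) with ((/ INR k) ^ (r - 1)) by (now rewrite pow_inv).
  rewrite <- pow_mult.
  replace ((r - 1) * m)%nat with (m * r - m)%nat by nia.
  replace ((/ INR k) ^ (m * r)) with (/ INR k ^ m * (/ INR k) ^ (m * r - m)).
  2: { rewrite <- pow_inv, <- pow_add. f_equal. nia. }
  pose proof (pow_lt (/ INR k) (m * r - m) (Rinv_0_lt_compat _ Hk0)).
  pose proof (Rinv_0_lt_compat _ (pow_lt (INR k) m Hk0)).
  pose proof (pow_le_pow_le_1 (INR m / INR n) (2 * m) (m * r) ltac:(lra) ltac:(nia)).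
  unfold Rdiv at 2. rewrite !Rmult_assoc. apply Rmult_le_compat_r; [|assumption].
  apply Rmult_le_pos; lra.
Qed.

Lemma exp_mul_le_6_5_pow (m : nat) : exp (0.181 * INR m) * exp (INR m / 1000) <= (6/5) ^ m.
Proof.
  rewrite <- exp_plus, (pow_eq_exp_ln (6/5) m) by lra. apply exp_le_exp.
  pose proof ln_6_5_ge. pose proof (pos_INR m).
  assert (INR m * 0.182 <= INR m * ln (6/5)) by (apply Rmult_le_compat_l; lra). lra.
Qed.

Lemma lhs_le_binomial_gamma_ratio (n m k r : nat) :
  (2 <= k)%nat -> (k <= m)%nat -> (m <= n)%nat -> (2 <= r)%nat ->
  Binomial.C n m * Binomial.C (m - 1) (k - 1)
    * (INR (fact m) / Gamma (INR m / INR k) ^ k) * (INR m / (INR k * INR n)) ^ (m * r)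
  <= Binomial.C n m * (INR m / INR n) ^ (2 * m) * gamma_ratio m k * (/ INR k ^ (r - 1)) ^ m.
Proof.
  intros Hk Hkm Hmn Hr.
  assert (Hk0 : 0 < INR k ^ m) by (apply pow_lt, lt_0_INR; lia).
  pose proof (ratio_pow_le n m k r ltac:(lia) Hmn ltac:(lia) Hr).
  destruct (ln_gamma_ratio_le m k Hk Hkm) as [Hgam0 _].
  pose proof (binomial_C_pos n m).
  set (B := Binomial.C (m - 1) (k - 1) * (INR (fact m) / Gamma (INR m / INR k) ^ k)).
  assert (EB : B = gamma_ratio m k * INR k ^ m) by (unfold gamma_ratio; fold B; field; lra).
  assert (0 < B) by (rewrite EB; apply Rmult_lt_0_compat; lra).
  replace (Binomial.C n m * Binomial.C (m - 1) (k - 1) * (INR (fact m) / Gamma (INR m / INR k) ^ k))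
    with (Binomial.C n m * B) by (unfold B; ring).
  apply Rle_trans with
    (Binomial.C n m * B * ((INR m / INR n) ^ (2 * m) / INR k ^ m * (/ INR k ^ (r - 1)) ^ m)).
  - apply Rmult_le_compat_l; [apply Rmult_le_pos|]; lra.
  - right. rewrite EB. field. lra.
Qed.

Theorem lemma2 :
  exists C : R, 0 < C /\
    forall n m k r : nat,
      (2 <= k)%nat -> (k <= m)%nat -> (m <= n)%nat -> (2 <= r)%nat ->
      Binomial.C n m * Binomial.C (m - 1) (k - 1)
        * (INR (fact m) / (Gamma (INR m / INR k)) ^ k)
        * (INR m / (INR k * INR n)) ^ (m * r)
      <= C * Rmin (INR m ^ k) (2 ^ m) * (6 / 5 / INR k ^ (r - 1)) ^ m.
Proof.
  exists (exp gamma_ratio_const). split; [apply exp_pos|].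
  intros n m k r Hk Hkm Hmn Hr.
  eapply Rle_trans; [exact (lhs_le_binomial_gamma_ratio n m k r Hk Hkm Hmn Hr)|].
  assert (Hkr : 0 < INR k ^ (r - 1)) by (apply pow_lt, lt_0_INR; lia).
  replace ((6 / 5 / INR k ^ (r - 1)) ^ m) with ((6/5) ^ m * (/ INR k ^ (r - 1)) ^ m)
    by (rewrite <- Rpow_mult_distr; f_equal; field; lra).
  rewrite <- Rmult_assoc. apply Rmult_le_compat_r; [apply pow_le, Rlt_le, Rinv_0_lt_compat, Hkr|].
  pose proof (binomial_C_mul_ratio_pow_le n m ltac:(lia) Hmn) as Hbin.
  pose proof (gamma_ratio_le m k Hk Hkm) as Hgam.
  destruct (ln_gamma_ratio_le m k Hk Hkm) as [Hgam0 _].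
  pose proof (exp_mul_le_6_5_pow m) as H65.
  set (Mn := Rmin (INR m ^ k) (2 ^ m)) in *.
  assert (HMn : 0 <= Mn) by (apply Rmin_glb; apply pow_le; [apply pos_INR | lra]).
  pose proof (exp_pos gamma_ratio_const).
  apply Rle_trans with (exp (0.181 * INR m) * (exp gamma_ratio_const * exp (INR m / 1000) * Mn)).
  - apply Rmult_le_compat; [| lra | exact Hbin | exact Hgam].
    apply Rmult_le_pos; [apply Rlt_le, binomial_C_pos|].
    apply pow_le, Rdiv_le_0_compat; [apply pos_INR | apply lt_0_INR; lia].
  - replace (exp (0.181 * INR m) * (exp gamma_ratio_const * exp (INR m / 1000) * Mn))
      with (exp gamma_ratio_const * Mn * (exp (0.181 * INR m) * exp (INR m / 1000))) by ring.
    apply Rmult_le_compat_l; [apply Rmult_le_pos|]; lra.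
Qed.
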